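(* Let $G$ be a finite simple $d$-regular graph on $2n$ vertices ($d\ge 1$) that contains at least one perfect matching. Choose edges of $G$ one at a time in a uniformly random order (without repetition), stopping as soon as every vertex has degree at least one; call the resulting random graph $G_\omega$. Then $$\mathbb{E}\left(\frac{\#\{\text{perfect matchings of } G \text{ contained in } G_\omega\}}{\#\{\text{perfect matchings of } G\}}\right) = \frac{2}{\binom{n+d-1}{n}} - \frac{1}{\binom{n+2d-2}{n}}.$$
   Context: Precisely: a uniformly random ordering $(e_1,\dots,e_m)$ of the $m$ edges of $G$ is chosen, $k$ is the least index such that the graph on $V(G)$ with edges $e_1,\dots,e_k$ has no isolated vertex, and $G_\omega$ is that graph. A perfect matching is a set of edges such that every vertex lies in exactly one of them. *)

From mathcomp Require Import all_boot all_order all_algebra.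
Set Implicit Arguments. Unset Strict Implicit. Unset Printing Implicit Defensive.
Import GRing.Theory Num.Theory.

Section Graphs.
Variable T : finType.

Definition simple_graph (e : rel T) : Prop := symmetric e /\ irreflexive e.

Definition regular (e : rel T) (d : nat) : Prop :=
  forall x : T, #|[set y | e x y]| = d.

Definition edges (e : rel T) : {set {set T}} :=
  [set [set x; y] | x in T, y in T & e x y].

Definition covers (S : {set {set T}}) : bool :=
  [forall x : T, [exists f in S, x \in f]].

Definition perfect_matching (e : rel T) (M : {set {set T}}) : bool :=
  (M \subset edges e) && [forall x : T, #|[set f in M | x \in f]| == 1].

Definition perfect_matchings (e : rel T) : {set {set {set T}}} :=
  [set M | perfect_matching e M].

(* An ordering of the m = |E(G)| edges: a bijection 'I_m -> E(G), given as an
   injective finite function with values in E(G). *)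
Definition orderings (e : rel T) : {set {ffun 'I_#|edges e| -> {set T}}} :=
  [set o : {ffun 'I_#|edges e| -> {set T}} | injectiveb o & [forall i, o i \in edges e]].

Definition prefix (e : rel T) (o : {ffun 'I_#|edges e| -> {set T}}) (k : nat)
  : {set {set T}} := [set o i | i : 'I_#|edges e| & (i < k)%N].

Definition stop_index (e : rel T) (o : {ffun 'I_#|edges e| -> {set T}}) : nat :=
  find (fun k => covers (prefix o k)) (iota 0 (#|edges e|).+1).

Definition G_omega (e : rel T) (o : {ffun 'I_#|edges e| -> {set T}}) : {set {set T}} :=
  prefix o (stop_index o).

Definition pm_fraction (e : rel T) (o : {ffun 'I_#|edges e| -> {set T}}) : rat :=
  (#|[set M in perfect_matchings e | M \subset G_omega o]|%:R
   / #|perfect_matchings e|%:R)%R.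

Definition expected_pm_fraction (e : rel T) : rat :=
  ((#|orderings e|%:R)^-1 * \sum_(o in orderings e) pm_fraction o)%R.

End Graphs.

(** Fix a perfect matching [M] and view the random ordering as a permutation
    [s] of the [m] edges.  [M] lies in [G_omega] exactly when, at the moment
    the last edge [f = uv] of [M] appears in [s], one of [u], [v] is still
    isolated: all other edges of [M] come before [f] and all other edges at
    [u] (or at [v]) come after it.  Among the [m!] orderings, those in which a
    given [l]-set of items precedes [f] and a disjoint [a]-set follows it
    number [m! l! a! / (l + a + 1)!].  Inclusion-exclusion over the two
    endpoints of [f], whose other edges form disjoint sets of [d - 1] edges,
    and summation over the [n] edges of [M] give
    [m! n (2 (n-1)! (d-1)! / (n+d-1)! - (n-1)! (2d-2)! / (n+2d-2)!)],
    which is [m!] times the claimed value, independently of [M]. *)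

From Pilot Require Import Defs.
From mathcomp Require Import all_boot all_order all_algebra.
From mathcomp Require Import ring zify.
Set Implicit Arguments. Unset Strict Implicit. Unset Printing Implicit Defensive.
Import GRing.Theory Num.Theory.
Local Open Scope ring_scope.

Section SeqLemmas.
Variable X : eqType.
Implicit Types (s B L A : seq X) (x : X).

Lemma count_sum (a : pred X) s : count a s = (\sum_(x <- s) a x)%N.
Proof. by rewrite -sum1_count big_mkcond. Qed.

Lemma count_permutations_cons (P : pred (seq X)) s : uniq s -> (0 < size s)%N ->
  count P (permutations s)
    = (\sum_(x <- s) count (fun t => P (x :: t)) (permutations (rem x s)))%N.
Proof.
move=> Us s_gt0; rewrite (permP (permutationsE s_gt0)) undup_id // count_flatten.
by rewrite sumnE !big_map; apply: eq_bigr => x _; rewrite count_map.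
Qed.

Lemma perm_cat_filter_notin s B :
  uniq s -> uniq B -> {subset B <= s} -> perm_eq s (B ++ [seq x <- s | x \notin B]).
Proof.
move=> Us UB sBs; apply: uniq_perm => [||x]; first exact: Us.
- rewrite cat_uniq UB filter_uniq // andbT; apply/hasPn => x.
  by rewrite mem_filter => /andP[].
- by rewrite mem_cat mem_filter; case: (boolP (x \in B)) => // /sBs.
Qed.

Lemma rem_cat_l L A x : x \in L -> rem x (L ++ A) = rem x L ++ A.
Proof. by elim: L => //= y L IH; rewrite inE; case: eqVneq => //= _ /IH ->. Qed.

Lemma subset_rem s B x : uniq s -> uniq B -> {subset B <= s} -> {subset rem x B <= rem x s}.
Proof.
move=> Us UB sBs g; rewrite (mem_rem_uniq _ UB) (mem_rem_uniq _ Us) !inE.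
by case/andP=> -> /sBs.
Qed.

End SeqLemmas.

Lemma card_set_cond (X : finType) (A : {set X}) (P : pred X) :
  #|[set x in A | P x]| = (\sum_(x in A) P x)%N.
Proof.
rewrite -sum1_card big_mkcond [RHS]big_mkcond; apply: eq_bigr => x _.
by rewrite inE; case: (x \in A).
Qed.

Lemma ltn_find_iota (P : pred nat) N j :
  (forall i k, (i <= k)%N -> P i -> P k) -> P N ->
  (j < find P (iota 0 N.+1))%N = ~~ P j.
Proof.
move=> P_mono PN; have has_P : has P (iota 0 N.+1).
  by apply/hasP; exists N; rewrite // mem_iota add0n ltnSn.
have lt_find : (find P (iota 0 N.+1) < N.+1)%N.
  by rewrite -[X in (_ < X)%N](size_iota 0) -has_find.
have := nth_find 0 has_P; rewrite nth_iota // add0n => P_find.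
apply/idP/idP => [lt_j|]; last by apply: contraR; rewrite -leqNgt => /P_mono; apply.
by have := before_find 0 lt_j; rewrite nth_iota ?(ltn_trans lt_j) // add0n => ->.
Qed.

Lemma fact_neq0 k : (k`!%:R : rat) != 0.
Proof. by rewrite pnatr_eq0 -lt0n fact_gt0. Qed.

Definition sandwich_count (m l a : nat) : rat :=
  m`!%:R * l`!%:R * a`!%:R / (l + a).+1`!%:R.

Lemma sandwich_countS m l a : (l + a <= m)%N ->
  (l == 0%N)%:R * m`!%:R + l%:R * sandwich_count m l.-1 a
    + (m - (l + a))%:R * sandwich_count m l a = sandwich_count m.+1 l a.
Proof.
move/subnK=> <-; rewrite addnK /sandwich_count; move: (m - _)%N => k.
case: l => [|l]; rewrite ?eqxx -?[l.+1.-1]/l -?[l.+1 == 0%N]/false ?mul1r ?mul0r.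
all: rewrite ?add0n ?addSn ?addnS !factS -?addSn !natrM -!natr1 !natrD.
all: by field; rewrite ?fact_neq0 -?natrD ?natr1 ?pnatr_eq0.
Qed.

Section Sandwich.
Variable X : eqType.
Implicit Types (s t L A : seq X) (f x : X).

Definition sandwiched L f A s : bool :=
  all (fun g => index g s < index f s)%N L && all (fun g => index f s < index g s)%N A.

Lemma sandwiched_cons_self L f A t : f \notin A ->
  sandwiched L f A (f :: t) = nilp L.
Proof.
move=> fA; rewrite /sandwiched /= eqxx; case: L => [|g L] //=.
by apply/allP => g gA /=; case: eqP => // fg; rewrite fg gA in fA.
Qed.

Lemma sandwiched_cons_before L f A x t : uniq L -> x \in L -> x != f -> x \notin A ->
  sandwiched L f A (x :: t) = sandwiched (rem x L) f A t.
Proof.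
move=> UL xL xf xA; rewrite /sandwiched /= (negbTE xf); congr andb.
  rewrite rem_filter // all_filter; apply: eq_in_all => g _ /=.
  by case: eqVneq => [<-|]; rewrite ?eqxx // eq_sym => ->.
by apply: eq_in_all => g gA /=; case: eqVneq => // xg; rewrite xg gA in xA.
Qed.

Lemma sandwiched_cons_after L f A x t : x \in A -> x != f ->
  sandwiched L f A (x :: t) = false.
Proof.
by move=> xA xf; rewrite /sandwiched /= (negbTE xf); apply/negbTE/nandP; right;
  apply/allPn; exists x; rewrite //= eqxx.
Qed.

Lemma sandwiched_cons_other L f A x t : x \notin f :: L ++ A ->
  sandwiched L f A (x :: t) = sandwiched L f A t.
Proof.
rewrite inE mem_cat negb_or => /andP[xf /norP[xL xA]].
rewrite /sandwiched /= (negbTE xf); congr andb; apply: eq_in_all => g /=.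
  by case: eqVneq => // <-; rewrite (negbTE xL).
by case: eqVneq => // <-; rewrite (negbTE xA).
Qed.

Lemma count_sandwiched_cons_self L f A s : uniq s -> f \notin A ->
  count (fun t => sandwiched L f A (f :: t)) (permutations s) = (nilp L * (size s)`!)%N.
Proof.
move=> Us fA; rewrite (eq_count (a2 := fun=> nilp L)) => [|t]; last exact: sandwiched_cons_self.
by case: (nilp L); rewrite ?count_pred0 // count_predT size_permutations // mul1n.
Qed.

Lemma count_sandwiched_cons_after L f A x s : x \in A -> x != f ->
  count (fun t => sandwiched L f A (x :: t)) (permutations s) = 0%N.
Proof.
move=> xA xf; rewrite (eq_count (a2 := pred0)) ?count_pred0 // => t.
exact: sandwiched_cons_after.
Qed.

Lemma count_sandwiched L f A s : uniq s -> uniq (f :: L ++ A) -> {subset f :: L ++ A <= s} ->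
  (count (sandwiched L f A) (permutations s))%:R = sandwich_count (size s) (size L) (size A).
Proof.
move s_size: (size s) => m; elim: m => [|m IH] in L A s s_size *.
  by move/eqP/nilP: s_size => -> _ _ /(_ f (mem_head _ _)).
set B := f :: L ++ A => Us UB sBs.
have [fL fA] : f \notin L /\ f \notin A by move: UB; rewrite /= mem_cat => /andP[/norP].
have [UL LA] : uniq L /\ ~~ has (mem L) A.
  by move: UB; rewrite cons_uniq cat_uniq => /and4P[_ ->].
have size_rem_s x : x \in s -> size (rem x s) = m by move=> xs; rewrite size_rem // s_size.
have count_before x : x \in L ->
    (count (fun t => sandwiched L f A (x :: t)) (permutations (rem x s)))%:R
    = sandwich_count m (size L).-1 (size A).
  move=> xL; have xf : x != f by apply: contraNneq fL => <-.
  have xA : x \notin A by apply: contraNN LA => xA; apply/hasP; exists x.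
  have x_s : x \in s by apply: sBs; rewrite inE mem_cat xL orbT.
  have remB : rem x B = f :: rem x L ++ A by rewrite /B /= eq_sym (negbTE xf) rem_cat_l.
  rewrite (eq_count (a2 := sandwiched (rem x L) f A)) => [|t]; last exact: sandwiched_cons_before.
  rewrite IH ?size_rem_s ?size_rem ?rem_uniq -?remB ?rem_uniq //; exact: subset_rem.
have count_other x : x \in [seq y <- s | y \notin B] ->
    (count (fun t => sandwiched L f A (x :: t)) (permutations (rem x s)))%:R
    = sandwich_count m (size L) (size A).
  rewrite mem_filter => /andP[xB xs].
  rewrite (eq_count (a2 := sandwiched L f A)) => [|t]; last exact: sandwiched_cons_other.
  by rewrite IH ?rem_uniq ?size_rem_s // -/B -(rem_id xB); apply: subset_rem.
rewrite count_permutations_cons ?s_size // natr_sum (perm_big _ (perm_cat_filter_notin Us UB sBs)).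
rewrite big_cat big_cons big_cat /=.
rewrite count_sandwiched_cons_self ?rem_uniq ?size_rem_s ?sBs ?mem_head //.
rewrite (eq_big_seq _ count_before) [\sum_(x <- A) _]big1_seq; last first.
  move=> x /andP[_ xA]; have xf : x != f by apply: contraNneq fA => <-.
  by rewrite count_sandwiched_cons_after.
rewrite (eq_big_seq _ count_other) !big_const_seq !count_predT !iter_addr_0 addr0.
have size_s : m.+1 = ((size L + size A).+1 + size [seq y <- s | y \notin B])%N.
  by rewrite -s_size (perm_size (perm_cat_filter_notin Us UB sBs)) size_cat /= size_cat.
have -> : size [seq y <- s | y \notin B] = (m - (size L + size A))%N by lia.
rewrite -sandwich_countS; last lia.
by rewrite natrM -[_ *+ size L]mulr_natl -[_ *+ (m - _)]mulr_natl.
Qed.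

End Sandwich.

Lemma count_sandwiched_sets (X : finType) (E L A : {set X}) f :
  f \in E -> L \subset E -> A \subset E -> f \notin L -> f \notin A -> [disjoint L & A] ->
  (count (sandwiched (enum L) f (enum A)) (permutations (enum E)))%:R
    = sandwich_count #|E| #|L| #|A|.
Proof.
move=> fE LE AE fL fA LA; rewrite count_sandwiched ?enum_uniq -?cardE //.
  rewrite /= mem_cat !mem_enum negb_or fL fA cat_uniq !enum_uniq /= andbT.
  apply/hasPn => g; rewrite !mem_enum => gA; apply: contraL LA => gL.
  by apply/pred0Pn; exists g; apply/andP.
move=> g; rewrite inE mem_cat !mem_enum => /or3P[/eqP -> | /(subsetP LE) | /(subsetP AE)] //.
Qed.

Section StoppingTime.
Variable T : finType.
Implicit Types (s : seq {set T}) (g : {set T}).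

Definition prefix_set s k : {set {set T}} := [set g | g \in take k s].

Definition stop_time s : nat :=
  find (fun k => covers (prefix_set s k)) (iota 0 (size s).+1).

Definition omega s : {set {set T}} := prefix_set s (stop_time s).

Lemma mem_prefix_set s k g : (g \in prefix_set s k) = (g \in s) && (index g s < k)%N.
Proof.
rewrite inE; case: (boolP (g \in s)) => [|g_s]; first exact: in_take.
by apply/negbTE; apply: contra g_s; apply: mem_take.
Qed.

Lemma covers_prefix_set_mono s i k :
  (i <= k)%N -> covers (prefix_set s i) -> covers (prefix_set s k).
Proof.
move=> le_ik /forallP cov; apply/forallP => x; have /existsP[g /andP[g_pre xg]] := cov x.
apply/existsP; exists g; rewrite xg andbT; move: g_pre.
by rewrite !mem_prefix_set => /andP[-> /leq_trans]; apply.
Qed.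

Lemma ltn_stop_time s j : covers [set g | g \in s] ->
  (j < stop_time s)%N = ~~ covers (prefix_set s j).
Proof.
move=> cov_s; apply: ltn_find_iota; first exact: covers_prefix_set_mono.
by rewrite /prefix_set take_size.
Qed.

End StoppingTime.

Section OrderingsAsSequences.
Variables (T : finType) (e : rel T).
Implicit Types (o : {ffun 'I_#|edges e| -> {set T}}).

Lemma prefix_codom o k : Defs.prefix o k = prefix_set (codom o) k.
Proof.
have size_o : size (codom o) = #|edges e| by rewrite size_codom card_ord.
apply/setP => g; rewrite inE; apply/imsetP/idP => [[i]|g_pre].
  rewrite inE => lt_ik ->; rewrite -(nth_fgraph_ord set0) -codom_ffun -(nth_take _ lt_ik).
  by rewrite mem_nth // size_take size_o; case: ifP.
have g_o : g \in codom o := mem_take g_pre.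
have lt_g : (index g (codom o) < #|edges e|)%N.
  by have := index_mem g (codom o); rewrite g_o size_o.
exists (Ordinal lt_g); first by rewrite inE /= -in_take.
by rewrite -(nth_fgraph_ord set0) -codom_ffun /= nth_index.
Qed.

Lemma G_omega_codom o : G_omega o = omega (codom o).
Proof.
rewrite /G_omega /omega /stop_time /stop_index size_codom card_ord prefix_codom.
by congr prefix_set; apply: eq_find => k; rewrite prefix_codom.
Qed.

Lemma perm_codom_orderings :
  perm_eq [seq codom o | o <- enum (orderings e)] (permutations (enum (edges e))).
Proof.
apply: uniq_perm => [||s].
- rewrite map_inj_in_uniq ?enum_uniq // => o1 o2 _ _ eq_o.
  by apply/ffunP => i; rewrite -!(nth_fgraph_ord set0) -!codom_ffun eq_o.
- exact: permutations_uniq.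
rewrite mem_permutations; apply/mapP/idP => [[o]|perm_s].
  rewrite mem_enum inE => /andP[inj_o /forallP o_edges] ->.
  have uniq_o : uniq (codom o) by rewrite codomE (map_inj_uniq (injectiveP _ inj_o)) enum_uniq.
  have [_ eq_o] : (size (codom o) = size (enum (edges e))) * (codom o =i enum (edges e)).
    apply: uniq_min_size => // [_ /codomP[i ->]|]; first by rewrite mem_enum.
    by rewrite size_codom card_ord cardE.
  by apply: uniq_perm; rewrite ?enum_uniq.
have size_s : size s = #|edges e| by rewrite (perm_size perm_s) cardE.
have uniq_s : uniq s by rewrite (perm_uniq perm_s) enum_uniq.
pose o := [ffun i : 'I_#|edges e| => nth set0 s i].
have codom_o : codom o = s.
  apply: (@eq_from_nth _ set0) => [|i]; first by rewrite size_codom card_ord size_s.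
  rewrite size_codom card_ord => lt_i.
  by rewrite codom_ffun (nth_fgraph_ord set0 (Ordinal lt_i)) ffunE.
exists o => //; rewrite mem_enum inE; apply/andP; split.
  apply/injectiveP => i j; rewrite !ffunE => /eqP.
  by rewrite nth_uniq ?size_s // => /eqP /val_inj.
by apply/forallP => i; rewrite ffunE -mem_enum -(perm_mem perm_s) mem_nth // size_s.
Qed.

Lemma card_orderings : #|orderings e| = #|edges e|`!.
Proof.
rewrite cardE -(size_map (fun o => codom o)) (perm_size perm_codom_orderings).
by rewrite size_permutations ?enum_uniq // -cardE.
Qed.

Lemma sum_card_sub_G_omega (P : {set {set {set T}}}) :
  (\sum_(o in orderings e) #|[set M in P | M \subset G_omega o]|
    = \sum_(M in P) count (fun s => M \subset omega s) (permutations (enum (edges e))))%N.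
Proof.
rewrite (eq_bigr (fun o => #|[set M in P | M \subset omega (codom o)]|)) => [|o _]; last first.
  by rewrite G_omega_codom.
rewrite -big_enum /=.
rewrite -(big_map (fun o => codom o) xpredT (fun s => #|[set M in P | M \subset omega s]|)).
rewrite (perm_big _ perm_codom_orderings) /=.
under eq_bigr do rewrite card_set_cond.
by rewrite exchange_big; apply: eq_bigr => M _; rewrite count_sum.
Qed.

End OrderingsAsSequences.

Section Matching.
Variables (T : finType) (e : rel T) (M : {set {set T}}).
Hypothesis M_pm : perfect_matching e M.

Definition incident (x : T) : {set {set T}} := [set g in edges e | x \in g].

Definition last_isolating (f : {set T}) (s : seq {set T}) : bool :=
  [exists x in f, sandwiched (enum (M :\ f)) f (enum (incident x :\ f)) s].

Lemma matching_sub_edges : M \subset edges e.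
Proof. by case/andP: M_pm. Qed.

Lemma matching_edge_unique x f g : f \in M -> g \in M -> x \in f -> x \in g -> f = g.
Proof.
case/andP: M_pm => _ /forallP/(_ x)/cards1P[h Mx] fM gM xf xg.
have mem_Mx k : k \in M -> x \in k -> k = h.
  by move=> kM xk; apply/set1P; rewrite -Mx inE kM.
by rewrite (mem_Mx f fM xf) (mem_Mx g gM xg).
Qed.

Lemma matching_edge x : exists2 f, f \in M & x \in f.
Proof.
case/andP: M_pm => _ /forallP/(_ x)/cards1P[f Mx].
have : f \in [set f in M | x \in f] by rewrite Mx set11.
by rewrite inE => /andP[fM xf]; exists f.
Qed.

Section FixedOrder.
Variable s : seq {set T}.
Hypothesis s_edges : s =i edges e.

Lemma matching_sub_seq f : f \in M -> f \in s.
Proof. by move=> fM; rewrite s_edges (subsetP matching_sub_edges). Qed.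

Lemma index_matching_neq f g : f \in M -> g \in M -> f != g -> index f s != index g s.
Proof.
move=> fM gM; apply: contraNneq => /index_inj -> //; exact: matching_sub_seq.
Qed.

Lemma covers_seq : covers [set g | g \in s].
Proof.
apply/forallP => x; have [f fM xf] := matching_edge x.
by apply/existsP; exists f; rewrite inE matching_sub_seq.
Qed.

Lemma last_isolating_sub_omega f : f \in M -> last_isolating f s -> M \subset omega s.
Proof.
move=> fM /exists_inP[x xf /andP[/allP before /allP after]].
have lt_f_stop : (index f s < stop_time s)%N.
  rewrite ltn_stop_time ?covers_seq //; apply/negP => /forallP/(_ x)/exists_inP[g].
  rewrite mem_prefix_set => /andP[g_s lt_gf] xg.
  have g_inc : g \in enum (incident x :\ f).
    rewrite mem_enum !inE -s_edges g_s xg !andbT.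
    by move: lt_gf; apply: contraTneq => ->; rewrite ltnn.
  by move: (after g g_inc); rewrite ltnNge ltnW.
apply/subsetP => g gM; rewrite mem_prefix_set matching_sub_seq //=.
case: (eqVneq g f) => [-> //|gf]; apply: ltn_trans lt_f_stop; apply: before.
by rewrite mem_enum !inE gf.
Qed.

Lemma sub_omega_last_isolating : M != set0 -> M \subset omega s ->
  exists2 f, f \in M & last_isolating f s.
Proof.
case/set0Pn=> f0 f0M sub_omega.
have [f fM f_max] := @arg_maxnP _ f0 (mem M) (fun g => index g s) f0M.
have lt_max g : g \in M -> g != f -> (index g s < index f s)%N.
  by move=> gM gf; rewrite ltn_neqAle (index_matching_neq gM fM gf); apply: f_max.
have : (index f s < stop_time s)%N.
  by have := subsetP sub_omega f fM; rewrite mem_prefix_set => /andP[].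
rewrite ltn_stop_time ?covers_seq // negb_forall => /existsP[x /exists_inPn isolated].
have [h hM xh] := matching_edge x.
have hf : h = f.
  apply/eqP; apply: contraT => hf; move: (isolated h); rewrite xh.
  by rewrite mem_prefix_set matching_sub_seq // lt_max //; apply.
exists f => //; apply/exists_inP; exists x; first by rewrite -hf.
apply/andP; split; apply/allP => g; rewrite mem_enum !inE.
  by case/andP=> gf gM; apply: lt_max.
case/andP=> gf /andP[gE xg]; have g_s : g \in s by rewrite s_edges.
rewrite ltnNge leq_eqVlt negb_or; apply/andP; split.
  by apply: contra gf => /eqP/index_inj -> //; rewrite matching_sub_seq.
by apply/negP => lt_gf; move: (isolated g); rewrite mem_prefix_set g_s lt_gf xg => /(_ isT).
Qed.

Lemma last_isolating_unique f g : f \in M -> g \in M ->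
  last_isolating f s -> last_isolating g s -> f = g.
Proof.
move=> fM gM /exists_inP[x _ /andP[/allP f_last _]] /exists_inP[y _ /andP[/allP g_last _]].
apply/eqP; apply: contraT => fg.
have := f_last g; have := g_last f; rewrite !mem_enum !inE fM gM fg eq_sym fg.
by move=> /(_ isT) lt_fg /(_ isT); rewrite ltnNge ltnW.
Qed.

Lemma sub_omega_sum : M != set0 ->
  (M \subset omega s : nat) = (\sum_(f in M) last_isolating f s)%N.
Proof.
move=> M_neq0; case: (boolP (M \subset omega s)) => [sub|not_sub].
  have [f fM f_last] := sub_omega_last_isolating M_neq0 sub.
  rewrite (bigD1 f) //= f_last big1 // => g /andP[gM gf].
  by apply/eqP; rewrite eqb0; apply: contra gf => g_last; rewrite (last_isolating_unique gM fM).
rewrite big1 // => f fM; apply/eqP; rewrite eqb0; apply: contra not_sub.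
exact: last_isolating_sub_omega.
Qed.

End FixedOrder.

Lemma count_sub_omega : M != set0 ->
  count (fun s => M \subset omega s) (permutations (enum (edges e)))
    = (\sum_(f in M) count (last_isolating f) (permutations (enum (edges e))))%N.
Proof.
move=> M_neq0; rewrite count_sum big_seq.
rewrite (eq_bigr (fun s => \sum_(f in M) last_isolating f s)%N); last first.
  move=> s; rewrite mem_permutations => perm_s; apply: sub_omega_sum M_neq0 => g.
  by rewrite (perm_mem perm_s) mem_enum.
by rewrite -big_seq exchange_big; apply: eq_bigr => f _; rewrite count_sum.
Qed.

End Matching.

Lemma binomial_ratE a b : 'C(a + b, a)%:R = (a + b)`!%:R / (a`!%:R * b`!%:R) :> rat.
Proof.
rewrite -(bin_fact (leq_addr b a)) addKn !natrM mulfK //.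
by rewrite -natrM pnatr_eq0 -lt0n muln_gt0 !fact_gt0.
Qed.

Lemma sandwich_count_identity m n d : (0 < n)%N -> (0 < d)%N ->
  (sandwich_count m n.-1 d.-1 *+ 2 - sandwich_count m n.-1 (d.-1 + d.-1)) *+ n
    = m`!%:R * (2 / 'C(n + d - 1, n)%:R - 1 / 'C(n + 2 * d - 2, n)%:R).
Proof.
case: n => [//|n] _; case: d => [//|d] _.
have -> : (n.+1 + d.+1 - 1 = n.+1 + d)%N by lia.
have -> : (n.+1 + 2 * d.+1 - 2 = n.+1 + (d + d))%N by lia.
rewrite !binomial_ratE /sandwich_count -mulr_natr !addSn /= !factS !natrM -!natr1 !natrD.
by field; rewrite !fact_neq0 -!natrD !natr1 !pnatr_eq0.
Qed.

Section RegularGraph.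
Variables (T : finType) (e : rel T) (n d : nat).
Hypotheses (e_simple : simple_graph e) (card_T : #|T| = (2 * n)%N) (e_regular : regular e d).

Lemma edgesP g : reflect (exists x y, e x y /\ g = [set x; y]) (g \in edges e).
Proof.
apply: (iffP imset2P) => [[x y _]|[x [y [exy ->]]]].
  by rewrite inE => exy ->; exists x, y.
by exists x y => //; rewrite inE.
Qed.

Lemma edge_neq x y : e x y -> x != y.
Proof. by case: e_simple => _ irr exy; apply: contraTneq exy => ->; rewrite irr. Qed.

Lemma card_edge g : g \in edges e -> #|g| = 2%N.
Proof. by case/edgesP => x [y [exy ->]]; rewrite cards2 edge_neq. Qed.

Lemma card_incident x : #|incident e x| = d.
Proof.
rewrite -(e_regular x); have -> : incident e x = [set [set x; y] | y in [set y | e x y]].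
  apply/setP => g; rewrite inE; apply/andP/imsetP => [[/edgesP[a [b [eab ->]]]]|[y]].
    rewrite !inE => /orP[]/eqP ->; first by exists b; rewrite ?inE.
    by exists a; rewrite 1?setUC // inE; case: e_simple => sym _; rewrite sym.
  by rewrite inE => exy ->; split; [apply/edgesP; exists x, y | rewrite set21].
rewrite card_in_imset // => y1 y2; rewrite !inE => e1 e2 eq_y.
have : y1 \in [set x; y2] by rewrite -eq_y set22.
by rewrite !inE eq_sym (negbTE (edge_neq e1)) => /eqP.
Qed.

Lemma disjoint_incident_edge u v : e u v ->
  [disjoint incident e u :\ [set u; v] & incident e v :\ [set u; v]].
Proof.
move=> euv; apply/pred0Pn => -[g /andP[]]; rewrite !inE => /and3P[g_uv gE ug] /and3P[_ _ vg].
move: g_uv; rewrite eq_sym eqEcard card_edge // cards2 edge_neq // andbT.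
by apply/negP; rewrite negbK; apply/subsetP => x; rewrite !inE => /orP[]/eqP->.
Qed.

Variable M : {set {set T}}.
Hypothesis M_pm : perfect_matching e M.

Lemma card_matching : #|M| = n.
Proof.
have card_M2 f : f \in M -> #|f| = 2%N.
  by move=> fM; rewrite card_edge ?(subsetP (matching_sub_edges M_pm)).
have M_partition : partition M [set: T].
  apply/and3P; split.
  - apply/eqP/setP => x; rewrite inE; have [f fM xf] := matching_edge M_pm x.
    by apply/bigcupP; exists f.
  - apply/trivIsetP => f g fM gM; apply: contraR => /pred0Pn[x /andP[xf xg]].
    by rewrite (matching_edge_unique M_pm fM gM xf xg).
  - by apply: contraL isT => /card_M2; rewrite cards0.
apply/eqP; rewrite -(eqn_pmul2l (isT : 0 < 2)%N) -card_T -cardsT (card_partition M_partition).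
by rewrite (eq_bigr (fun=> 2%N)) // sum_nat_const mulnC.
Qed.

Lemma disjoint_matching_incident f x : f \in M -> x \in f ->
  [disjoint M :\ f & incident e x :\ f].
Proof.
move=> fM xf; apply/pred0Pn => -[g /andP[]]; rewrite !inE => /andP[gf gM] /and3P[_ _ xg].
by move: gf; rewrite (matching_edge_unique M_pm gM fM xg xf) eqxx.
Qed.

Lemma count_last_isolating f : f \in M ->
  (count (last_isolating e M f) (permutations (enum (edges e))))%:R
    = sandwich_count #|edges e| n.-1 d.-1 *+ 2 - sandwich_count #|edges e| n.-1 (d.-1 + d.-1).
Proof.
move=> fM; have fE := subsetP (matching_sub_edges M_pm) f fM.
have /edgesP[u [v [euv f_uv]]] := fE.
have [uf vf] : u \in f /\ v \in f by rewrite f_uv set21 set22.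
set L := M :\ f; pose A x := incident e x :\ f.
pose before_isolated x s := sandwiched (enum L) f (enum (A x)) s.
have last_isolatingE s : last_isolating e M f s = before_isolated u s || before_isolated v s.
  apply/exists_inP/orP => [[x]|[Pu|Pv]]; [|by exists u|by exists v].
  by rewrite {1}f_uv !inE => /orP[]/eqP->; [left | right].
have both_isolatedE s : sandwiched (enum L) f (enum (A u :|: A v)) s
    = before_isolated u s && before_isolated v s.
  rewrite /before_isolated /sandwiched.
  rewrite (eq_all_r (s1 := enum (A u :|: A v)) (s2 := enum (A u) ++ enum (A v))).
    by rewrite all_cat; case: all.
  by move=> g; rewrite mem_cat !mem_enum inE.
have count_sets (B : {set {set T}}) : B \subset edges e -> f \notin B -> [disjoint L & B] ->
    (count (sandwiched (enum L) f (enum B)) (permutations (enum (edges e))))%:R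
    = sandwich_count #|edges e| n.-1 #|B|.
  move=> BE fB LB; rewrite count_sandwiched_sets ?setD11 //.
    by rewrite /L -card_matching [#|M|](cardsD1 f) fM add1n.
  by apply: subset_trans (matching_sub_edges M_pm); apply: subsetDl.
have A_edges x : A x \subset edges e by apply/subsetP => g; rewrite !inE => /and3P[].
have card_A x : x \in f -> #|A x| = d.-1.
  by move=> xf; rewrite -(card_incident x) [#|incident e x|](cardsD1 f) inE fE xf.
have f_notin_A x : f \notin A x by rewrite !inE eqxx.
have disj_LA x : x \in f -> [disjoint L & A x] by apply: disjoint_matching_incident.
have disj_L_Auv : [disjoint L & A u :|: A v].
  by rewrite disjoints_subset setCU subsetI -!disjoints_subset !disj_LA.
have f_notin_Auv : f \notin A u :|: A v by rewrite inE negb_or !f_notin_A.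
have card_Auv : #|A u :|: A v| = (d.-1 + d.-1)%N.
  rewrite cardsU disjoint_setI0 ?cards0 ?subn0 ?card_A //.
  by rewrite /A f_uv disjoint_incident_edge.
have := count_predUI (before_isolated u) (before_isolated v) (permutations (enum (edges e))).
rewrite (eq_count last_isolatingE) -(eq_count both_isolatedE) => /(congr1 (fun k => k%:R : rat)).
rewrite !natrD !count_sets ?card_A ?card_Auv ?disj_LA ?subUset ?A_edges //.
by move/(canRL (addrK _)) ->; rewrite mulr2n.
Qed.

Lemma count_sub_omega_matching : (0 < d)%N ->
  (count (fun s => M \subset omega s) (permutations (enum (edges e))))%:R
    = #|edges e|`!%:R * (2 / 'C(n + d - 1, n)%:R - 1 / 'C(n + 2 * d - 2, n)%:R) :> rat.
Proof.
move=> d_gt0; have count_all : (count predT (permutations (enum (edges e))) = #|edges e|`!)%N.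
  by rewrite count_predT size_permutations ?enum_uniq // -cardE.
have [M0|M_neq0] := eqVneq M set0.
  have n0 : n = 0%N by rewrite -card_matching M0 cards0.
  rewrite (eq_count (a2 := predT)) => [|s]; last by rewrite M0 sub0set.
  by rewrite count_all n0 !add0n !bin0 !divr1; ring.
have n_gt0 : (0 < n)%N by rewrite -card_matching card_gt0.
rewrite count_sub_omega // natr_sum (eq_bigr _ count_last_isolating).
by rewrite sumr_const card_matching sandwich_count_identity.
Qed.

End RegularGraph.

Theorem corollary2 (T : finType) (e : rel T) (n d : nat) :
  simple_graph e ->
  #|T| = (2 * n)%N ->
  (1 <= d)%N ->
  regular e d ->
  perfect_matchings e != set0 ->
  expected_pm_fraction e =
    (2 / ('C(n + d - 1, n))%:R - 1 / ('C(n + 2 * d - 2, n))%:R)%R.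
Proof.
move=> e_simple card_T d_gt0 e_regular PM_neq0.
set F := (2 / _ - _)%R.
have count_M M : M \in perfect_matchings e ->
    (count (fun s => M \subset omega s) (permutations (enum (edges e))))%:R
    = #|edges e|`!%:R * F.
  by rewrite inE => M_pm; apply: count_sub_omega_matching.
rewrite /expected_pm_fraction /pm_fraction -mulr_suml -natr_sum sum_card_sub_G_omega natr_sum.
rewrite (eq_bigr _ count_M) sumr_const card_orderings -mulr_natr.
have PM_gt0 : (#|perfect_matchings e|%:R : rat) != 0 by rewrite pnatr_eq0 -lt0n card_gt0.
by field; rewrite PM_gt0 fact_neq0.
Qed.
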